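(* Let $\{\rho_\theta\}$ be a model as in the context and suppose $\theta\mapsto\rho_\theta$ is differentiable from the right at $\theta$, with right derivative $\rho'_\theta$. Take $c_n=\sqrt n$. Then $J^{R,1}_\theta=J^R_\theta$, where $J^R_\theta=\mathrm{Tr}(\rho_\theta L^R_\theta(L^R_\theta)^\dagger)$ and $L^R_\theta=\rho_\theta^{-1}\rho'_\theta$.
   Context: $\mathcal H$ finite-dimensional, $\rho_\theta>0$. $\Delta^1_\delta f(\theta)=(f(\theta+\delta)-f(\theta))/\delta$; $L^{R,n,1}_{\theta,\delta}$ solves $\Delta^1_\delta\rho_\theta^{\otimes n}=\rho_\theta^{\otimes n}L^{R,n,1}_{\theta,\delta}$; $J^{R,1}_\theta=\limsup_{h\to0+}\limsup_{n\to\infty}c_n^{-2}\mathrm{Tr}\big(\rho_\theta^{\otimes n}L^{R,n,1}_{\theta,h/c_n}(L^{R,n,1}_{\theta,h/c_n})^\dagger\big)$. *)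

From HB Require Import structures.
From mathcomp Require Import all_boot all_order all_algebra.
From mathcomp Require Import complex mxtens.
From mathcomp Require Import all_classical all_reals all_analysis.
Set Implicit Arguments. Unset Strict Implicit. Unset Printing Implicit Defensive.
Import Order.TTheory GRing.Theory Num.Theory.
Import numFieldNormedType.Exports.
Local Open Scope ring_scope.
Local Open Scope complex_scope.
Local Open Scope classical_set_scope.

Definition adj (R : rcfType) m n (A : 'M[R[i]]_(m, n)) : 'M[R[i]]_(n, m) :=
  (map_mx (@conjc R) A)^T.

Definition posdef (R : rcfType) d (A : 'M[R[i]]_d) : Prop :=
  adj A = A /\ forall v : 'rV[R[i]]_d, v != 0 -> 0 < (v *m A *m adj v) 0 0.

Definition faithful_state (R : rcfType) d (A : 'M[R[i]]_d) : Prop :=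
  posdef A /\ \tr A = 1.

Definition is_right_derivative (R : realType) d
  (rho : R -> 'M[R[i]]_d) (theta : R) (D : 'M[R[i]]_d) : Prop :=
  forall i j : 'I_d,
    (fun delta : R => complex.Re ((delta^-1)%:C * (rho (theta + delta) i j - rho theta i j)))
      @ (0:R)^'+ --> (complex.Re (D i j) : R) /\
    (fun delta : R => complex.Im ((delta^-1)%:C * (rho (theta + delta) i j - rho theta i j)))
      @ (0:R)^'+ --> (complex.Im (D i j) : R).

Definition rho_tens (R : rcfType) d (rho : R -> 'M[R[i]]_d) (n : nat) (t : R)
  : 'M[R[i]]_(d ^ n) := ntensmx (rho t) n.

Definition Delta1 (R : rcfType) d (rho : R -> 'M[R[i]]_d) (n : nat) (theta delta : R)
  : 'M[R[i]]_(d ^ n) :=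
  (delta^-1)%:C *: (rho_tens rho n (theta + delta) - rho_tens rho n theta).

(* L^{R,n,1}_{theta,delta}: the (unique, since rho^{\otimes n} is invertible)
   solution of Delta1 = rho^{\otimes n} L *)
Definition LRn1 (R : rcfType) d (rho : R -> 'M[R[i]]_d) (n : nat) (theta delta : R)
  : 'M[R[i]]_(d ^ n) :=
  invmx (rho_tens rho n theta) *m Delta1 rho n theta delta.

Definition cn (R : rcfType) (n : nat) : R := Num.sqrt (n%:R).

(* the quantity c_n^{-2} Tr(rho^{\otimes n} L L^dagger) with delta = h / c_n
   (real part; the trace is real) *)
Definition Jseq (R : rcfType) d (rho : R -> 'M[R[i]]_d) (theta h : R) (n : nat) : R :=
  (cn R n) ^- 2 *
  complex.Re (\tr (rho_tens rho n theta *m LRn1 rho n theta (h / cn R n)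
                   *m adj (LRn1 rho n theta (h / cn R n)))).

Definition JR1 (R : realType) d (rho : R -> 'M[R[i]]_d) (theta : R) : \bar R :=
  limf_esup (fun h : R => limn_esup (fun n => (Jseq rho theta h n)%:E)) (0:R)^'+.

Definition LR (R : rcfType) d (rho : R -> 'M[R[i]]_d) (theta : R) (D : 'M[R[i]]_d)
  : 'M[R[i]]_d := invmx (rho theta) *m D.

(* J^R_theta = Tr(rho_theta L^R (L^R)^dagger) (real part; the trace is real) *)
Definition JR (R : rcfType) d (rho : R -> 'M[R[i]]_d) (theta : R) (D : 'M[R[i]]_d) : R :=
  complex.Re (\tr (rho theta *m LR rho theta D *m adj (LR rho theta D))).

From HB Require Import structures.
From mathcomp Require Import all_boot all_order all_algebra.
From mathcomp Require Import complex mxtens.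
From mathcomp Require Import all_classical all_reals all_analysis.
From mathcomp Require Import ring lra.
Import Order.TTheory GRing.Theory Num.Theory.
Import numFieldNormedType.Exports.
Set Implicit Arguments.
Unset Strict Implicit.

Local Open Scope ring_scope.
Local Open Scope complex_scope.
Local Open Scope classical_set_scope.

(** For a step [delta] put [sigma = rho (theta + delta)], [W = rho theta^-1] and let
  [g(delta)] be [J^R] computed with the difference quotient in place of [rho'].  As all
  states are Hermitian with unit trace, [Tr (rho^{\otimes n} L L^dagger)] equals
  [Tr ((sigma^{\otimes n} - rho^{\otimes n})^2 W^{\otimes n}) / delta^2 = (x^n - 1) / delta^2]
  with [x = Tr (sigma^2 W) = 1 + delta^2 g(delta)].  For [delta = h / sqrt n] the quantity
  under the limsups is therefore [((1 + h^2 g / n)^n - 1) / h^2], which Bernoulli's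
  inequality squeezes between [g] and [g + 2 h^2 g^2] uniformly in [n].  Since [g(delta)]
  tends to [J^R] as [delta -> 0+], both limsups equal [J^R]. *)

Section Adjoint.
Variable R : rcfType.

Lemma adjM m n p (A : 'M[R[i]]_(m, n)) (B : 'M[R[i]]_(n, p)) :
  adj (A *m B) = adj B *m adj A.
Proof. by rewrite /adj map_mxM trmx_mul. Qed.

Lemma adjK m n (A : 'M[R[i]]_(m, n)) : adj (adj A) = A.
Proof. by apply/matrixP => i j; rewrite !mxE conjcK. Qed.

Lemma adjB m n (A B : 'M[R[i]]_(m, n)) : adj (A - B) = adj A - adj B.
Proof. by apply/matrixP => i j; rewrite !mxE rmorphB. Qed.

Lemma adjZ_real m n (c : R) (A : 'M[R[i]]_(m, n)) : adj (c%:C *: A) = c%:C *: adj A.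
Proof. by apply/matrixP => i j; rewrite !mxE rmorphM /= oppr0. Qed.

Lemma mxtrace_adj n (A : 'M[R[i]]_n) : \tr (adj A) = (\tr A)^*.
Proof.
rewrite /adj mxtrace_tr /mxtrace rmorph_sum.
by apply: eq_bigr => i _; rewrite mxE.
Qed.

Lemma adj_invmx n (A : 'M[R[i]]_n) : adj (invmx A) = invmx (adj A).
Proof. by rewrite /adj map_invmx trmx_inv. Qed.

Lemma adj_ntens m (A : 'M[R[i]]_m) k : adj (A ^t k) = adj A ^t k.
Proof.
case: k => [|k]; first by rewrite !ntensmx0 /adj map_mx1 trmx1.
elim: k => [|k IH]; first by rewrite !ntensmx1.
by rewrite !ntensmxSS /adj map_mxT trmx_tens -/(adj _) -/(adj _) IH.
Qed.

Lemma mxtrace_gram_real m n (P : 'M[R[i]]_m) (L : 'M[R[i]]_(m, n)) :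
  adj P = P -> \tr (P *m L *m adj L) = (complex.Re (\tr (P *m L *m adj L)))%:C.
Proof.
move=> P_herm.
have : (\tr (P *m L *m adj L))^* = \tr (P *m L *m adj L).
  by rewrite -mxtrace_adj !adjM adjK P_herm mulmxA mxtrace_mulC mulmxA.
case: (\tr _) => a b [b_eq].
by congr (_ +i* _); lra.
Qed.

End Adjoint.

Section TensorPower.
Variable R : comPzRingType.

Lemma mxtrace_tens m n (A : 'M[R]_m) (B : 'M[R]_n) : \tr (A *t B) = \tr A * \tr B.
Proof. by rewrite /mxtrace mulr_sum; apply: eq_bigr => i _; rewrite mxE. Qed.

Lemma tensmx11 m n : (1%:M : 'M[R]_m) *t (1%:M : 'M[R]_n) = 1%:M.
Proof.
apply/matrixP => i j.
case: (mxtens_indexP i) => i1 i2; case: (mxtens_indexP j) => j1 j2.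
rewrite tensmxE !mxE -natrM mulnb; congr ((_ : bool)%:R); apply/idP/eqP.
  by case/andP => /eqP -> /eqP ->.
by move/(congr1 (@mxtens_unindex m n)); rewrite !mxtens_indexK => -[-> ->]; rewrite !eqxx.
Qed.

Lemma mxtrace_ntens m (A : 'M[R]_m) k : \tr (A ^t k) = \tr A ^+ k.
Proof.
case: k => [|k]; first by rewrite ntensmx0 mxtrace1 expr0.
elim: k => [|k IH]; first by rewrite ntensmx1 expr1.
by rewrite ntensmxSS mxtrace_tens IH -exprS.
Qed.

Lemma ntensmx_mul m (A B : 'M[R]_m) k : A ^t k *m B ^t k = (A *m B) ^t k.
Proof.
case: k => [|k]; first by rewrite !ntensmx0 mulmx1.
elim: k => [|k IH]; first by rewrite !ntensmx1.
by rewrite !ntensmxSS tensmx_mul IH.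
Qed.

Lemma ntensmx_scalar1 m k : (1%:M : 'M[R]_m) ^t k = 1%:M.
Proof.
case: k => [|k]; first by rewrite ntensmx0.
elim: k => [|k IH]; first by rewrite ntensmx1.
by rewrite ntensmxSS IH tensmx11.
Qed.

End TensorPower.

Section TensorPowerInverse.
Variables (R : comUnitRingType) (m : nat) (A : 'M[R]_m).
Hypothesis A_unit : A \in unitmx.

Lemma mul_invmx_ntens k : invmx A ^t k *m A ^t k = 1%:M.
Proof. by rewrite ntensmx_mul mulVmx // ntensmx_scalar1. Qed.

Lemma unitmx_ntens k : A ^t k \in unitmx.
Proof. by have [] := mulmx1_unit (mul_invmx_ntens k). Qed.

Lemma invmx_ntens k : invmx (A ^t k) = invmx A ^t k.
Proof.
by rewrite -[invmx _]mul1mx -(mul_invmx_ntens k) -mulmxA mulmxV ?mulmx1 ?unitmx_ntens.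
Qed.

End TensorPowerInverse.

Lemma posdef_unitmx (R : rcfType) n (A : 'M[R[i]]_n) : posdef A -> A \in unitmx.
Proof.
case=> _ A_pos; rewrite -row_free_unit -kermx_eq0; apply: contraT => kerA_neq0.
have /existsP[i kerA_i] : [exists i, row i (kermx A) != 0].
  apply: contraR kerA_neq0 => /existsPn rows0; apply/eqP/row_matrixP => i.
  by rewrite row0; apply/eqP/negbNE/rows0.
have : row i (kermx A) *m A = 0 by apply/sub_kermxP; rewrite row_sub.
by move/(A_pos _): kerA_i => /[swap] ->; rewrite mul0mx mxE ltxx.
Qed.

Lemma mxtrace_rld_diff (R : rcfType) m (P S : 'M[R[i]]_m) (c : R) :
  P \in unitmx -> adj P = P -> adj S = S ->
  let L := invmx P *m (c%:C *: (S - P)) in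
  \tr (P *m L *m adj L) = (c ^+ 2)%:C * (\tr (S *m S *m invmx P) - 2 * \tr S + \tr P).
Proof.
move=> P_unit P_herm S_herm L.
have W_herm : adj (invmx P) = invmx P by rewrite adj_invmx P_herm.
have -> : P *m L *m adj L = (c ^+ 2)%:C *: ((S - P) *m (S - P) *m invmx P).
  rewrite /L adjM adjZ_real adjB S_herm P_herm W_herm !mulmxA mulmxV // mul1mx.
  by rewrite -scalemxAr -!scalemxAl scalerA -rmorphM -expr2.
rewrite mxtraceZ; congr (_ * _).
rewrite mulmxBl !mulmxBr !mulmxBl !linearB /=.
rewrite -[S *m P *m _]mulmxA -[P *m P *m _]mulmxA mulmxV // !mulmx1.
by rewrite [\tr (P *m S *m _)]mxtrace_mulC mulmxA mulVmx // mul1mx; ring.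
Qed.

Section Model.
Variables (R : rcfType) (d : nat) (rho : R -> 'M[R[i]]_d) (theta : R).
Hypothesis rho_state : forall t, faithful_state (rho t).

Definition JR_diff (delta : R) : R :=
  JR rho theta ((delta^-1)%:C *: (rho (theta + delta) - rho theta)).

Let rho_herm t : adj (rho t) = rho t. Proof. by case: (rho_state t) => -[]. Qed.
Let rho_tr1 t : \tr (rho t) = 1. Proof. by case: (rho_state t). Qed.
Let rho_unit t : rho t \in unitmx. Proof. by case: (rho_state t) => /posdef_unitmx. Qed.

Lemma mxtrace_LRn1 n delta :
  \tr (rho_tens rho n theta *m LRn1 rho n theta delta *m adj (LRn1 rho n theta delta))
  = ((delta^-1) ^+ 2)%:C *
    (\tr (rho (theta + delta) *m rho (theta + delta) *m invmx (rho theta)) ^+ n - 1).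
Proof.
rewrite /LRn1 /Delta1 mxtrace_rld_diff /rho_tens ?unitmx_ntens ?adj_ntens ?rho_herm //.
rewrite invmx_ntens // !ntensmx_mul !mxtrace_ntens !rho_tr1 expr1n.
by congr (_ * _); ring.
Qed.

Lemma mxtrace_sq_quotient delta : delta != 0 ->
  \tr (rho (theta + delta) *m rho (theta + delta) *m invmx (rho theta))
  = (1 + delta ^+ 2 * JR_diff delta)%:C.
Proof.
move=> delta_neq0.
have delta_neq0C : delta%:C != 0 by rewrite eq_complex /= negb_and delta_neq0.
have JR_diffE : (JR_diff delta)%:C = ((delta^-1) ^+ 2)%:C *
    (\tr (rho (theta + delta) *m rho (theta + delta) *m invmx (rho theta)) - 1).
  rewrite /JR_diff /JR /LR -mxtrace_gram_real // mxtrace_rld_diff // !rho_tr1.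
  by congr (_ * _); ring.
rewrite rmorphD rmorphM rmorphXn /= JR_diffE rmorphXn fmorphV /=.
by field.
Qed.

Lemma Jseq_compound h n : 0 < h -> (0 < n)%N ->
  Jseq rho theta h n = ((1 + h ^+ 2 / n%:R * JR_diff (h / cn R n)) ^+ n - 1) / h ^+ 2.
Proof.
move=> h_gt0 n_gt0.
have cn_sq : cn R n ^+ 2 = n%:R by rewrite /cn sqr_sqrtr // ler0n.
have cn_neq0 : cn R n != 0 by rewrite /cn gt_eqF // sqrtr_gt0 ltr0n.
have n_neq0 : n%:R != 0 :> R by rewrite pnatr_eq0 -lt0n.
have delta_neq0 : h / cn R n != 0 by rewrite mulf_neq0 ?invr_eq0 // gt_eqF.
rewrite /Jseq mxtrace_LRn1 mxtrace_sq_quotient //.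
have ReC (a b : R) : complex.Re (a%:C * (b%:C ^+ n - 1)) = a * (b ^+ n - 1).
  have -> : b%:C ^+ n - 1 = (b ^+ n - 1)%:C by rewrite rmorphB rmorphXn rmorph1.
  by rewrite /= mul0r subr0.
rewrite ReC exprVn expr_div_n cn_sq.
by field; rewrite n_neq0 gt_eqF.
Qed.

End Model.

Section ComplexConvergence.
Variables (R : realType) (F : set_system R).
Context {FF : Filter F}.

(* [R[i]] carries no topology here: convergence is taken componentwise. *)
Definition ccvg (f : R -> R[i]) (l : R[i]) :=
  (fun x => complex.Re (f x)) @ F --> complex.Re l /\
  (fun x => complex.Im (f x)) @ F --> complex.Im l.

Definition mxccvg m n (A : R -> 'M[R[i]]_(m, n)) (L : 'M[R[i]]_(m, n)) :=
  forall i j, ccvg (fun x => A x i j) (L i j).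

Lemma ccvg_cst (l : R[i]) : ccvg (fun=> l) l.
Proof. by split; apply: cvg_cst. Qed.

Lemma ccvgD f g a b : ccvg f a -> ccvg g b -> ccvg (fun x => f x + g x) (a + b).
Proof.
move: a b => [a1 a2] [b1 b2] [f1 f2] [g1 g2]; split.
  have -> : (fun x => complex.Re (f x + g x)) =
            (fun x => complex.Re (f x) + complex.Re (g x)).
    by apply: funext => x; case: (f x) (g x) => [? ?] [? ?].
  exact: cvgD.
have -> : (fun x => complex.Im (f x + g x)) =
          (fun x => complex.Im (f x) + complex.Im (g x)).
  by apply: funext => x; case: (f x) (g x) => [? ?] [? ?].
exact: cvgD.
Qed.

Lemma ccvgM f g a b : ccvg f a -> ccvg g b -> ccvg (fun x => f x * g x) (a * b).
Proof.
move: a b => [a1 a2] [b1 b2] [f1 f2] [g1 g2]; split.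
  have -> : (fun x => complex.Re (f x * g x)) = (fun x =>
      complex.Re (f x) * complex.Re (g x) - complex.Im (f x) * complex.Im (g x)).
    by apply: funext => x; case: (f x) (g x) => [? ?] [? ?].
  by apply: cvgB; apply: cvgM.
have -> : (fun x => complex.Im (f x * g x)) = (fun x =>
    complex.Re (f x) * complex.Im (g x) + complex.Im (f x) * complex.Re (g x)).
  by apply: funext => x; case: (f x) (g x) => [? ?] [? ?].
by apply: cvgD; apply: cvgM.
Qed.

Lemma ccvgJ f a : ccvg f a -> ccvg (fun x => (f x)^*) a^*.
Proof.
move: a => [a1 a2] [f1 f2]; split.
  have -> : (fun x => complex.Re (f x)^*) = (fun x => complex.Re (f x)).
    by apply: funext => x; case: (f x).
  exact: f1.
have -> : (fun x => complex.Im (f x)^*) = (fun x => - complex.Im (f x)).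
  by apply: funext => x; case: (f x).
exact: cvgN.
Qed.

Lemma ccvg_sum (I : Type) (r : seq I) (f : I -> R -> R[i]) (l : I -> R[i]) :
  (forall i, ccvg (f i) (l i)) ->
  ccvg (fun x => \sum_(i <- r) f i x) (\sum_(i <- r) l i).
Proof.
move=> fl; elim: r => [|a r IH].
  under eq_fun do rewrite big_nil.
  by rewrite big_nil; apply: ccvg_cst.
under eq_fun do rewrite big_cons.
by rewrite big_cons; apply: ccvgD.
Qed.

Lemma mxccvg_cst m n (L : 'M[R[i]]_(m, n)) : mxccvg (fun=> L) L.
Proof. by move=> i j; apply: ccvg_cst. Qed.

Lemma mxccvgM m n p (A : R -> 'M[R[i]]_(m, n)) (B : R -> 'M[R[i]]_(n, p)) LA LB :
  mxccvg A LA -> mxccvg B LB -> mxccvg (fun x => A x *m B x) (LA *m LB).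
Proof.
move=> AL BL i j; under eq_fun do rewrite mxE.
by rewrite mxE; apply: ccvg_sum => k; apply: ccvgM.
Qed.

Lemma mxccvg_adj m n (A : R -> 'M[R[i]]_(m, n)) L :
  mxccvg A L -> mxccvg (fun x => adj (A x)) (adj L).
Proof.
move=> AL i j; under eq_fun do rewrite !mxE.
by rewrite !mxE; apply: ccvgJ.
Qed.

Lemma ccvg_trace m (A : R -> 'M[R[i]]_m) L :
  mxccvg A L -> ccvg (fun x => \tr (A x)) (\tr L).
Proof. by move=> AL; apply: ccvg_sum => k; apply: AL. Qed.

End ComplexConvergence.

Lemma JR_diff_cvg (R : realType) d (rho : R -> 'M[R[i]]_d) theta D :
  is_right_derivative rho theta D -> JR_diff rho theta @ 0^'+ --> JR rho theta D.
Proof.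
move=> rho_D.
have LR_cvg : mxccvg 0^'+
    (fun x : R => invmx (rho theta) *m ((x^-1)%:C *: (rho (theta + x) - rho theta)))
    (LR rho theta D).
  apply: mxccvgM; first exact: mxccvg_cst.
  by move=> i j; under eq_fun do rewrite !mxE; apply: rho_D.
apply: (proj1 (ccvg_trace _)).
by apply: mxccvgM; [apply: mxccvgM; [apply: mxccvg_cst|] | apply: mxccvg_adj].
Qed.

Section CompoundQuotient.
Variable R : realFieldType.

Lemma bernoulli_ineq (t : R) n : -1 <= t -> 1 + n%:R * t <= (1 + t) ^+ n.
Proof.
move=> t_ge; elim: n => [|n IH]; first by rewrite mul0r addr0 expr0.
rewrite exprS -natr1.
have := ler_wpM2l (_ : 0 <= 1 + t) IH.
have : 0 <= n%:R * t ^+ 2 by rewrite mulr_ge0 ?ler0n ?sqr_ge0.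
nra.
Qed.

(* With [t = a g / n], the upper bound comes from [(1 + t)^n (1 - t)^n <= 1] and
   Bernoulli's inequality for [(1 - t)^n]. *)
Lemma compound_quotient_bounds (a g : R) n : 0 < a -> (0 < n)%N -> `|a * g| <= 1/2 ->
  g <= ((1 + a / n%:R * g) ^+ n - 1) / a <= g + 2 * a * g ^+ 2.
Proof.
move=> a_gt0 n_gt0 u_small; have := u_small; rewrite ler_norml => /andP[u_ge u_le].
have n_ge1 : 1 <= n%:R :> R by rewrite ler1n.
set t := a / n%:R * g.
have nt : n%:R * t = a * g by rewrite /t; field; rewrite pnatr_eq0 -lt0n.
have t_small : `|t| <= 1/2.
  rewrite /t mulrAC normrM normfV normr_nat ler_pdivrMr ?(lt_le_trans ltr01) //.
  by apply: le_trans u_small _; rewrite ler_peMr.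
move: t_small; rewrite ler_norml => /andP[t_ge t_le].
have lower : 1 + a * g <= (1 + t) ^+ n by rewrite -nt; apply: bernoulli_ineq; lra.
have upper : 1 - a * g <= (1 - t) ^+ n.
  by rewrite -nt -mulrN; apply: bernoulli_ineq; lra.
have prod_le1 : (1 + t) ^+ n * (1 - t) ^+ n <= 1.
  by rewrite -exprMn; apply: exprn_ile1; nra.
have pow_ge0 : 0 <= (1 + t) ^+ n by apply: exprn_ge0; lra.
have bound : (1 + t) ^+ n * (1 - a * g) <= 1.
  exact: le_trans (ler_wpM2l pow_ge0 upper) prod_le1.
rewrite ler_pdivlMr // ler_pdivrMr //.
have -> : (g + 2 * a * g ^+ 2) * a = a * g + 2 * (a * g) ^+ 2 by ring.
apply/andP; split; first lra.
move: bound u_ge u_le; set u := a * g; set X := (1 + t) ^+ n => bound u_ge u_le.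
have cubic : 0 <= u ^+ 2 * (1 - 2 * u) by rewrite mulr_ge0 ?sqr_ge0 //; lra.
have : (X - 1 - u - 2 * u ^+ 2) * (1 - u) <= 0 by nra.
by rewrite pmulr_lle0 ?subr_le0; lra.
Qed.

Lemma compound_quotient_near (J g a e : R) n : 0 < a -> (0 < n)%N ->
  0 < e <= 1 -> `|g - J| < e / 2 -> a * (`|J| + 1) ^+ 2 <= e / 4 ->
  `|((1 + a / n%:R * g) ^+ n - 1) / a - J| <= e.
Proof.
move=> a_gt0 n_gt0 /andP[e_gt0 e_le1] gJ aK.
set K := `|J| + 1 in aK *.
have K_ge1 : 1 <= K by rewrite /K lerDr.
have g_le : `|g| <= K.
  by have := ler_normD (g - J) J; rewrite subrK /K; lra.
have g2_le : g ^+ 2 <= K ^+ 2.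
  by rewrite -real_normK ?num_real // lerXn2r ?nnegrE ?normr_ge0 //; lra.
have ag2_le : a * g ^+ 2 <= e / 4.
  by apply: le_trans aK; apply: ler_wpM2l; first exact: ltW.
have ag_small : `|a * g| <= 1/2.
  have g_leK2 : `|g| <= K ^+ 2 by apply: le_trans g_le _; rewrite expr2; nra.
  by rewrite normrM gtr0_norm //; have := ler_wpM2l (ltW a_gt0) g_leK2; lra.
have /andP[lo hi] := compound_quotient_bounds a_gt0 n_gt0 ag_small.
move: gJ; rewrite !ler_distl ltr_distl => /andP[? ?].
apply/andP; split; lra.
Qed.

End CompoundQuotient.

Lemma near_right0_interval (R : realFieldType) (P : R -> Prop) :
  (\forall x \near 0^'+, P x) -> \forall h \near 0^'+, forall x, 0 < x <= h -> P x.
Proof.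
move=> /nbhs_ballP[eta /= eta_gt0 P_eta]; near=> h => x /andP[x_gt0 x_le].
apply: P_eta => //; rewrite /ball /= sub0r normrN gtr0_norm //.
by apply: le_lt_trans x_le _; near: h; apply: nbhs_right_lt.
Unshelve. all: by end_near.
Qed.

Section LimfEsup.
Variables (T : choiceType) (X : filteredType T) (R : realType).
Variables (f : X -> \bar R) (F : set_system X).
Local Open Scope ereal_scope.

Lemma limf_esup_le b : F (fun x => f x <= b) -> limf_esup f F <= b.
Proof.
move=> f_le; rewrite limf_esupE; apply: ge_ereal_inf.
exists (ereal_sup (f @` (fun x => f x <= b))); first by exists (fun x => f x <= b).
by apply: ge_ereal_sup => _ [x fx_le <-].
Qed.

Lemma limf_esup_ge {FF : ProperFilter F} a : F (fun x => a <= f x) -> a <= limf_esup f F.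
Proof.
move=> f_ge; rewrite limf_esupE; apply: le_ereal_inf_tmp => _ [V FV <-].
have [x [Vx fx_ge]] := filter_ex (filterI FV f_ge).
by apply: le_ereal_sup_tmp; exists (f x) => //; exists x.
Qed.

End LimfEsup.

Lemma Jseq_near (R : realType) d (rho : R -> 'M[R[i]]_d) theta D (e : R) :
  (forall t, faithful_state (rho t)) -> is_right_derivative rho theta D -> 0 < e ->
  \forall h \near 0^'+, \forall n \near \oo,
    `|Jseq rho theta h n - JR rho theta D| <= e.
Proof.
move=> rho_state rho_D e_gt0.
set J := JR rho theta D.
set e1 := Num.min e 1.
have e1_gt0 : 0 < e1 by rewrite lt_min e_gt0 ltr01.
have e1_le : e1 <= e /\ e1 <= 1 by rewrite !ge_min !lexx orbT.
set K := `|J| + 1.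
have K_gt0 : 0 < K by rewrite /K ltr_pwDr.
have JR_diff_near : \forall h \near 0^'+, forall x, 0 < x <= h ->
    `|JR_diff rho theta x - J| < e1 / 2.
  apply: near_right0_interval; move/cvgrPdist_lt: (JR_diff_cvg rho_D).
  by move/(_ (e1 / 2) (divr_gt0 e1_gt0 (ltr0Sn _ 1))); apply: filterS => x; rewrite distrC.
near=> h; near=> n.
have h_gt0 : 0 < h by near: h; apply: nbhs_right_gt.
have n_gt0 : (0 < n)%N by near: n; exact: nbhs_infty_gt.
have cn_ge1 : 1 <= cn R n by rewrite /cn -[leLHS]sqrtr1 ler_sqrt ?ler0n // ler1n.
rewrite Jseq_compound //; apply: le_trans (proj1 e1_le).
apply: compound_quotient_near => //.
- by rewrite exprn_gt0.
- by rewrite e1_gt0; case: e1_le.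
- apply: (near JR_diff_near h) => //.
  have cn_gt0 : 0 < cn R n := lt_le_trans ltr01 cn_ge1.
  by rewrite divr_gt0 //= ler_pdivrMr // ler_peMr // ltW.
- have h_le1 : h <= 1 by near: h; apply: nbhs_right_le.
  have h_lt : h * (4 * K ^+ 2) < e1.
    by rewrite -ltr_pdivlMr ?mulr_gt0 ?exprn_gt0 //; near: h; apply: nbhs_right_lt;
      rewrite divr_gt0 ?mulr_gt0 ?exprn_gt0.
  have hK2_ge0 : 0 <= h * K ^+ 2 by rewrite mulr_ge0 ?sqr_ge0 // ltW.
  by rewrite -/K; nra.
Unshelve. all: by end_near.
Qed.

Theorem mainTheorem6 (R : realType) (d : nat) (rho : R -> 'M[R[i]]_d)
  (theta : R) (D : 'M[R[i]]_d) :
  (forall t : R, faithful_state (rho t)) ->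
  is_right_derivative rho theta D ->
  JR1 rho theta = ((JR rho theta D)%:E)%E.
Proof.
move=> rho_state rho_D; rewrite /JR1 /limn_esup.
apply/eqP; rewrite eq_le; apply/andP; split.
  apply/lee_addgt0Pr => e e_gt0; apply: limf_esup_le.
  apply: filterS (Jseq_near rho_state rho_D e_gt0) => h Jseq_h.
  rewrite -EFinD; apply: limf_esup_le; apply: filterS Jseq_h => n.
  by rewrite lee_fin ler_distl => /andP[].
apply/lee_subgt0Pr => e e_gt0; apply: limf_esup_ge.
apply: filterS (Jseq_near rho_state rho_D e_gt0) => h Jseq_h.
rewrite -EFinB; apply: limf_esup_ge; apply: filterS Jseq_h => n.
by rewrite lee_fin ler_distl => /andP[].
Qed.
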